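(* Let $M$ be a left $H$-module with action $\triangleright$, and let $T\in\mathrm{End}_k(M)$ be a projection ($T^2=T$). For $h\in H$ put $$T_h=h_{(1)}\triangleright T(S(h_{(2)})\triangleright -),\qquad \tilde T_h=S(h_{(1)})\triangleright T(h_{(2)}\triangleright -).$$ The following are equivalent: (i) $T_h\circ T=T\circ T_h$ for all $h\in H$; (ii) $\tilde T_h\circ T=T\circ\tilde T_h$ for all $h\in H$; (iii) $T_h\circ\tilde T_k=\tilde T_k\circ T_h$ for all $h,k\in H$.
   Context: Throughout, $k$ is a field and $H$ is a Hopf algebra over $k$ with bijective antipode $S$ and Sweedler notation $\Delta(h)=h_{(1)}\otimes h_{(2)}$. Condition (i) is called the c-condition and condition (ii) the $\tilde c$-condition. *)

(* An element of H (x) H is represented by a finite list of simple tensors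
   [(a_1,b_1); ...] meaning sum_i a_i (x) b_i (Sweedler notation).
   Equalities in H (x) H (resp. H (x) H (x) H) are expressed by testing
   against all bilinear (resp. trilinear) maps into arbitrary k-vector
   spaces, i.e. via the universal property of the tensor product. *)
From HB Require Import structures.
From mathcomp Require Import all_boot all_order all_algebra.
Set Implicit Arguments. Unset Strict Implicit. Unset Printing Implicit Defensive.
Import Order.TTheory GRing.Theory Num.Theory.
Local Open Scope ring_scope.

Section Hopf.
Variable k : fieldType.

Definition klinear (U V : lmodType k) (f : U -> V) : Prop :=
  forall (c : k) (x y : U), f (c *: x + y) = c *: f x + f y.

Definition kform_linear (U : lmodType k) (f : U -> k) : Prop :=
  forall (c : k) (x y : U), f (c *: x + y) = c * f x + f y.

Definition kbilinear (U W V : lmodType k) (phi : U -> W -> V) : Prop :=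
  (forall w, klinear (fun u => phi u w)) /\ (forall u, klinear (phi u)).

Definition ktrilinear (U W X V : lmodType k) (phi : U -> W -> X -> V) : Prop :=
  [/\ forall w x, klinear (fun u => phi u w x),
      forall u x, klinear (fun w => phi u w x)
    & forall u w, klinear (phi u w)].

Definition tens_eval (H V : lmodType k) (t : seq (H * H)) (phi : H -> H -> V) : V :=
  \sum_(p <- t) phi p.1 p.2.

Definition is_hopf (H : algType k) (Delta : H -> seq (H * H)) (eps : H -> k)
    (S : H -> H) : Prop :=
  [/\
      forall (V : lmodType k) (phi : H -> H -> V), kbilinear phi ->
        forall (c : k) (x y : H),
          tens_eval (Delta (c *: x + y)) phi
          = c *: tens_eval (Delta x) phi + tens_eval (Delta y) phi,
      forall (V : lmodType k) (phi : H -> H -> H -> V), ktrilinear phi ->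
        forall h : H,
          \sum_(p <- Delta h) \sum_(q <- Delta p.1) phi q.1 q.2 p.2
          = \sum_(p <- Delta h) \sum_(q <- Delta p.2) phi p.1 q.1 q.2,
      [/\ kform_linear eps,
          forall h : H, \sum_(p <- Delta h) eps p.1 *: p.2 = h
        & forall h : H, \sum_(p <- Delta h) eps p.2 *: p.1 = h],
      [/\ forall (V : lmodType k) (phi : H -> H -> V), kbilinear phi ->
            forall x y : H,
              tens_eval (Delta (x * y)) phi
              = \sum_(p <- Delta x) \sum_(q <- Delta y) phi (p.1 * q.1) (p.2 * q.2),
          forall (V : lmodType k) (phi : H -> H -> V), kbilinear phi ->
            tens_eval (Delta 1) phi = phi 1 1,
          forall x y : H, eps (x * y) = eps x * eps y
        & eps 1 = 1]
    &
      [/\ klinear S,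
          forall h : H, \sum_(p <- Delta h) S p.1 * p.2 = (eps h)%:A
        & forall h : H, \sum_(p <- Delta h) p.1 * S p.2 = (eps h)%:A]].

Definition is_left_module (H : algType k) (M : lmodType k) (act : H -> M -> M) : Prop :=
  [/\ kbilinear act,
      forall m : M, act 1 m = m
    & forall (a b : H) (m : M), act (a * b) m = act a (act b m)].

Definition Tc (H : algType k) (M : lmodType k) (Delta : H -> seq (H * H))
    (S : H -> H) (act : H -> M -> M) (T : M -> M) (h : H) (m : M) : M :=
  \sum_(p <- Delta h) act p.1 (T (act (S p.2) m)).

Definition Ttc (H : algType k) (M : lmodType k) (Delta : H -> seq (H * H))
    (S : H -> H) (act : H -> M -> M) (T : M -> M) (h : H) (m : M) : M :=
  \sum_(p <- Delta h) act (S p.1) (T (act p.2 m)).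

End Hopf.

(* T_h and ~T_h are the left and right adjoint actions h.T = h_(1) T S(h_(2))
   and T.h = S(h_(1)) T h_(2) of H on End_k(M).  An operator f is moved past
   the action of H by  a f = (a_(1).f) a_(2)  and  f S(a) = S(a_(1)) (a_(2).f)
   (and mirror identities for the right action).  Hence if T commutes with
   every a.f, then
     f (T.l) = S(l_(1)) (l_(2).f) T l_(3) = S(l_(1)) T (l_(2).f) l_(3) = (T.l) f.
   With f = T this is (i) => (ii), and symmetrically (ii) => (i); with
   f = h.T, for which a.(h.T) = (ah).T, it is (i) => (iii).  Finally (iii)
   for l = 1 is (i), as T.1 = T. *)

From HB Require Import structures.
From mathcomp Require Import all_boot all_order all_algebra.
Import GRing.Theory.
Local Open Scope ring_scope.
Set Implicit Arguments. Unset Strict Implicit. Unset Printing Implicit Defensive.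

Section KLinear.
Variable k : fieldType.
Implicit Types U V W X : lmodType k.

Lemma klinear0 U V (f : U -> V) : klinear f -> f 0 = 0.
Proof.
move=> linf; have := linf 1 0 0; rewrite scaler0 addr0 scale1r => f0.
by apply: (addIr (f 0)); rewrite add0r -f0.
Qed.

Lemma klinearD U V (f : U -> V) x y : klinear f -> f (x + y) = f x + f y.
Proof. by move=> linf; have := linf 1 x y; rewrite !scale1r. Qed.

Lemma klinearZ U V (f : U -> V) c x : klinear f -> f (c *: x) = c *: f x.
Proof. by move=> linf; have := linf c x 0; rewrite (klinear0 linf) !addr0. Qed.

Lemma klinear_sum U V (f : U -> V) (I : Type) (s : seq I) (F : I -> U) :
  klinear f -> f (\sum_(i <- s) F i) = \sum_(i <- s) f (F i).
Proof.
move=> linf; elim: s => [|i s IHs]; first by rewrite !big_nil klinear0.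
by rewrite !big_cons klinearD // IHs.
Qed.

Lemma klinear_id U : klinear (fun u : U => u).
Proof. by []. Qed.

Lemma klinear_comp U V W (f : V -> W) (g : U -> V) :
  klinear f -> klinear g -> klinear (fun u => f (g u)).
Proof. by move=> linf ling c x y; rewrite ling linf. Qed.

Lemma klinear_bil1 U W X V (F : U -> W -> V) (A : X -> U) w :
  kbilinear F -> klinear A -> klinear (fun x => F (A x) w).
Proof. by move=> [linF _] linA c x y; rewrite linA linF. Qed.

Lemma klinear_bil2 U W X V (F : U -> W -> V) (B : X -> W) u :
  kbilinear F -> klinear B -> klinear (fun x => F u (B x)).
Proof. by move=> [_ linF] linB c x y; rewrite linB linF. Qed.

Lemma klinear_scale X V (a : k) (B : X -> V) :
  klinear B -> klinear (fun x => a *: B x).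
Proof. by move=> linB c x y; rewrite linB scalerDr !scalerA mulrC. Qed.

Lemma klinear_mull (A : algType k) X (f : X -> A) b :
  klinear f -> klinear (fun x => f x * b).
Proof. by move=> linf c x y; rewrite linf mulrDl scalerAl. Qed.

Lemma klinear_mulr (A : algType k) X (f : X -> A) a :
  klinear f -> klinear (fun x => a * f x).
Proof. by move=> linf c x y; rewrite linf mulrDr scalerAr. Qed.

End KLinear.

Section Hopf.
Variables (k : fieldType) (H : algType k).
Variables (Delta : H -> seq (H * H)) (eps : H -> k) (S : H -> H).
Hypothesis hopfH : is_hopf Delta eps S.
Implicit Types (V W : lmodType k) (h x y : H).

Definition sweedler V h (F : H -> H -> V) : V := tens_eval (Delta h) F.

Lemma sweedler_ext V {h} (F G : H -> H -> V) :
  (forall a b, F a b = G a b) -> sweedler h F = sweedler h G.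
Proof. by move=> eFG; apply: eq_bigr => p _; apply: eFG. Qed.

Lemma sweedler_exchange V x y (F : H -> H -> H -> H -> V) :
  sweedler x (fun a b => sweedler y (F a b))
  = sweedler y (fun c d => sweedler x (fun a b => F a b c d)).
Proof. exact: exchange_big. Qed.

Lemma klinear_sweedler_comp V W (g : V -> W) h F :
  klinear g -> g (sweedler h F) = sweedler h (fun a b => g (F a b)).
Proof. exact: klinear_sum. Qed.

Lemma antipode_klinear : klinear S.
Proof. by case: hopfH => _ _ _ _ []. Qed.

Lemma klinear_sweedler V (F : H -> H -> V) :
  kbilinear F -> klinear (fun h => sweedler h F).
Proof. by case: hopfH => linDelta _ _ _ _ linF c x y; apply: linDelta. Qed.

Lemma klinear_sweedler_body (X V : lmodType k) h (F : X -> H -> H -> V) :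
  (forall a b, klinear (fun u => F u a b)) -> klinear (fun u => sweedler h (F u)).
Proof.
move=> linF c u v; rewrite /sweedler /tens_eval scaler_sumr -big_split.
by apply: eq_bigr => p _; apply: linF.
Qed.

Lemma coassoc V (F : H -> H -> H -> V) h : ktrilinear F ->
  sweedler h (fun a c => sweedler a (fun a1 a2 => F a1 a2 c))
  = sweedler h (fun a b => sweedler b (fun b1 b2 => F a b1 b2)).
Proof. by case: hopfH => _ coassocH _ _ _ linF; apply: coassocH. Qed.

Lemma counitl V (g : H -> V) h : klinear g ->
  sweedler h (fun a b => eps a *: g b) = g h.
Proof.
case: hopfH => _ _ [_ counitH _] _ _ ling.
rewrite -{2}(counitH h) klinear_sum //; apply: eq_bigr => p _; exact/esym/klinearZ.
Qed.

Lemma counitr V (g : H -> V) h : klinear g ->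
  sweedler h (fun a b => eps b *: g a) = g h.
Proof.
case: hopfH => _ _ [_ _ counitH] _ _ ling.
rewrite -{2}(counitH h) klinear_sum //; apply: eq_bigr => p _; exact/esym/klinearZ.
Qed.

Lemma antipodel V (g : H -> V) h : klinear g ->
  sweedler h (fun a b => g (S a * b)) = eps h *: g 1.
Proof.
case: hopfH => _ _ _ _ [_ antipodeH _] ling.
by rewrite -klinearZ // -(antipodeH h) /sweedler /tens_eval klinear_sum.
Qed.

Lemma antipoder V (g : H -> V) h : klinear g ->
  sweedler h (fun a b => g (a * S b)) = eps h *: g 1.
Proof.
case: hopfH => _ _ _ _ [_ _ antipodeH] ling.
by rewrite -klinearZ // -(antipodeH h) /sweedler /tens_eval klinear_sum.
Qed.

Lemma sweedlerM V (F : H -> H -> V) x y : kbilinear F ->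
  sweedler (x * y) F
  = sweedler x (fun a b => sweedler y (fun c d => F (a * c) (b * d))).
Proof. by case: hopfH => _ _ _ [DeltaM _ _ _] _ linF; apply: (DeltaM _ _ linF). Qed.

Lemma sweedler1 V (F : H -> H -> V) : kbilinear F -> sweedler 1 F = F 1 1.
Proof. by case: hopfH => _ _ _ [_ Delta1 _ _] _ linF; apply: (Delta1 _ _ linF). Qed.

Lemma counitM x y : eps (x * y) = eps x * eps y.
Proof. by case: hopfH => _ _ _ [_ _ epsM _] _. Qed.

Lemma counit1 : eps 1 = 1.
Proof. by case: hopfH => _ _ _ [_ _ _ eps1] _. Qed.

Create HintDb klinear.
#[local] Hint Resolve antipode_klinear : klinear.

Ltac klin := cbv beta; first
  [ exact: klinear_id
  | apply: klinear_mull; klin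
  | apply: klinear_mulr; klin
  | apply: klinear_sweedler; split => ?; klin
  | apply: klinear_sweedler_body => ? ?; klin
  | eapply klinear_bil1; [solve [eauto with klinear] | klin]
  | eapply klinear_bil2; [solve [eauto with klinear] | klin]
  | eapply klinear_scale; klin
  | eapply klinear_comp; [solve [eauto with klinear] | klin] ].
Ltac kbil := split => ?; klin.
Ltac ktril := split => ? ?; klin.

Lemma sweedler_Smul12 V (F : H -> H -> V) h : kbilinear F ->
  sweedler h (fun a b => sweedler b (fun b1 b2 => F (S a * b1) b2)) = F 1 h.
Proof.
move=> linF; rewrite -(coassoc (F := fun a1 a2 b => F (S a1 * a2) b)); last by ktril.
rewrite (sweedler_ext (G := fun a b => eps a *: F 1 b)); last first.
  by move=> a b; rewrite (antipodel (g := F^~ b)) //; klin.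
by rewrite counitl //; case: linF.
Qed.

Lemma sweedler_mulS12 V (F : H -> H -> V) h : kbilinear F ->
  sweedler h (fun a b => sweedler b (fun b1 b2 => F (a * S b1) b2)) = F 1 h.
Proof.
move=> linF; rewrite -(coassoc (F := fun a1 a2 b => F (a1 * S a2) b)); last by ktril.
rewrite (sweedler_ext (G := fun a b => eps a *: F 1 b)); last first.
  by move=> a b; rewrite (antipoder (g := F^~ b)) //; klin.
by rewrite counitl //; case: linF.
Qed.

Lemma sweedler_Smul23 V (F : H -> H -> V) h : kbilinear F ->
  sweedler h (fun a b => sweedler a (fun a1 a2 => F a1 (S a2 * b))) = F h 1.
Proof.
move=> linF; rewrite (coassoc (F := fun a b1 b2 => F a (S b1 * b2))); last by ktril.
rewrite (sweedler_ext (G := fun a b => eps b *: F a 1)); last first.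
  by move=> a b; rewrite (antipodel (g := F a)) //; klin.
by rewrite counitr //; klin.
Qed.

Lemma sweedler_mulS23 V (F : H -> H -> V) h : kbilinear F ->
  sweedler h (fun a b => sweedler a (fun a1 a2 => F a1 (a2 * S b))) = F h 1.
Proof.
move=> linF; rewrite (coassoc (F := fun a b1 b2 => F a (b1 * S b2))); last by ktril.
rewrite (sweedler_ext (G := fun a b => eps b *: F a 1)); last first.
  by move=> a b; rewrite (antipoder (g := F a)) //; klin.
by rewrite counitr //; klin.
Qed.

Lemma antipode1 : S 1 = 1.
Proof.
have := antipodel (g := id) 1 (@klinear_id _ _).
by rewrite sweedler1 ?counit1 ?mulr1 ?scale1r //; kbil.
Qed.

Lemma antipodeM x y : S (x * y) = S y * S x.
Proof.
symmetry; transitivity (sweedler x (fun a b => sweedler y (fun c d =>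
    sweedler a (fun a1 a2 => sweedler c (fun c1 c2 =>
      S (a1 * c1) * (a2 * c2) * (S d * S b)))))).
  rewrite -(counitl (g := fun b => S y * S b) x); last by klin.
  apply: sweedler_ext => a b.
  rewrite -(counitl (g := fun d => S d * S b) y); last by klin.
  rewrite klinear_sweedler_comp; last by klin.
  apply: sweedler_ext => c d.
  rewrite -(sweedlerM (F := fun u v => S u * v * (S d * S b))); last by kbil.
  by rewrite (antipodel (g := fun w => w * (S d * S b))) ?mul1r ?scalerA ?counitM //; klin.
transitivity (sweedler x (fun a b => sweedler a (fun a1 a2 => sweedler y (fun c d =>
    sweedler c (fun c1 c2 => S (a1 * c1) * (a2 * (c2 * S d)) * S b))))).
  apply: sweedler_ext => a b; rewrite sweedler_exchange.
  by do 3 apply: sweedler_ext => ? ?; rewrite !mulrA.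
transitivity (sweedler x (fun a b => sweedler a (fun a1 a2 => S (a1 * y) * (a2 * S b)))).
  apply: sweedler_ext => a b; apply: sweedler_ext => a1 a2.
  rewrite (sweedler_mulS23 (F := fun u v => S (a1 * u) * (a2 * v) * S b)); last by kbil.
  by rewrite mulr1 mulrA.
by rewrite (sweedler_mulS23 (F := fun u v => S (u * y) * v)) ?mulr1 //; kbil.
Qed.

Section AdjointActions.
Variables (M : lmodType k) (act : H -> M -> M).
Hypothesis modM : is_left_module act.
Implicit Types (f T : M -> M) (m : M).

Lemma act_kbilinear : kbilinear act. Proof. by case: modM. Qed.
Lemma act1 m : act 1 m = m. Proof. by case: modM. Qed.
Lemma actM a b m : act (a * b) m = act a (act b m). Proof. by case: modM. Qed.

#[local] Hint Resolve act_kbilinear : klinear.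

Definition adl h f m := sweedler h (fun a b => act a (f (act (S b) m))).
Definition adr f h m := sweedler h (fun a b => act (S a) (f (act b m))).

Lemma klinear_adl h f : klinear f -> klinear (adl h f).
Proof. by move=> linf; rewrite /adl; klin. Qed.

Lemma act_fun_adl f a m : klinear f ->
  act a (f m) = sweedler a (fun a1 a2 => adl a1 f (act a2 m)).
Proof.
move=> linf; symmetry; transitivity (sweedler a (fun a1 a2 =>
    sweedler a1 (fun x y => act x (f (act (S y * a2) m))))).
  by do 2 apply: sweedler_ext => ? ?; rewrite actM.
by rewrite (sweedler_Smul23 (F := fun u v => act u (f (act v m)))) ?act1 //; kbil.
Qed.

Lemma fun_actS_adl f a m : klinear f ->
  f (act (S a) m) = sweedler a (fun a1 a2 => act (S a1) (adl a2 f m)).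
Proof.
move=> linf; symmetry; transitivity (sweedler a (fun a1 a2 =>
    sweedler a2 (fun x y => act (S a1 * x) (f (act (S y) m))))).
  apply: sweedler_ext => a1 a2; rewrite /adl klinear_sweedler_comp; last by klin.
  by apply: sweedler_ext => x y; rewrite actM.
by rewrite (sweedler_Smul12 (F := fun u v => act u (f (act (S v) m)))) ?act1 //; kbil.
Qed.

Lemma fun_act_adr f a m : klinear f ->
  f (act a m) = sweedler a (fun a1 a2 => act a1 (adr f a2 m)).
Proof.
move=> linf; symmetry; transitivity (sweedler a (fun a1 a2 =>
    sweedler a2 (fun x y => act (a1 * S x) (f (act y m))))).
  apply: sweedler_ext => a1 a2; rewrite /adr klinear_sweedler_comp; last by klin.
  by apply: sweedler_ext => x y; rewrite actM.
by rewrite (sweedler_mulS12 (F := fun u v => act u (f (act v m)))) ?act1 //; kbil.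
Qed.

Lemma actS_fun_adr f a m : klinear f ->
  act (S a) (f m) = sweedler a (fun a1 a2 => adr f a1 (act (S a2) m)).
Proof.
move=> linf; symmetry; transitivity (sweedler a (fun a1 a2 =>
    sweedler a1 (fun x y => act (S x) (f (act (y * S a2) m))))).
  by do 2 apply: sweedler_ext => ? ?; rewrite actM.
by rewrite (sweedler_mulS23 (F := fun u v => act (S u) (f (act v m)))) ?act1 //; kbil.
Qed.

Lemma adlM a b f m : klinear f -> adl a (adl b f) m = adl (a * b) f m.
Proof.
move=> linf; rewrite /adl sweedlerM; last by kbil.
apply: sweedler_ext => a1 a2; rewrite klinear_sweedler_comp; last by klin.
by apply: sweedler_ext => b1 b2; rewrite antipodeM !actM.
Qed.

Lemma adr1 f m : klinear f -> adr f 1 m = f m.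
Proof.
move=> linf; rewrite /adr (sweedler1 (F := fun a b => act (S a) (f (act b m)))).
  by rewrite antipode1 !act1.
by kbil.
Qed.

Lemma commute_adr_of_adl f T : klinear f -> klinear T ->
    (forall a m, adl a f (T m) = T (adl a f m)) ->
  forall l m, f (adr T l m) = adr T l (f m).
Proof.
move=> linf linT adlfT l m; rewrite /adr klinear_sweedler_comp //.
transitivity (sweedler l (fun a b =>
    sweedler a (fun a1 a2 => act (S a1) (T (adl a2 f (act b m)))))).
  apply: sweedler_ext => a b; rewrite fun_actS_adl //.
  by apply: sweedler_ext => a1 a2; rewrite adlfT.
rewrite (coassoc (F := fun a1 a2 b => act (S a1) (T (adl a2 f (act b m))))); last first.
  by rewrite /adl; ktril.
apply: sweedler_ext => a b; rewrite (act_fun_adl _ _ linf).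
by rewrite (klinear_sweedler_comp (g := T)) // (klinear_sweedler_comp (g := act (S a))) //; klin.
Qed.

Lemma commute_adl_of_adr f T : klinear f -> klinear T ->
    (forall a m, adr f a (T m) = T (adr f a m)) ->
  forall l m, f (adl l T m) = adl l T (f m).
Proof.
move=> linf linT adrfT l m; rewrite /adl klinear_sweedler_comp //.
transitivity (sweedler l (fun a b =>
    sweedler a (fun a1 a2 => act a1 (T (adr f a2 (act (S b) m)))))).
  apply: sweedler_ext => a b; rewrite fun_act_adr //.
  by apply: sweedler_ext => a1 a2; rewrite adrfT.
rewrite (coassoc (F := fun a1 a2 b => act a1 (T (adr f a2 (act (S b) m))))); last first.
  by rewrite /adr; ktril.
apply: sweedler_ext => a b; rewrite (actS_fun_adr _ _ linf).
by rewrite (klinear_sweedler_comp (g := T)) // (klinear_sweedler_comp (g := act a)) //; klin.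
Qed.

End AdjointActions.
End Hopf.

Theorem mainTheorem5 (k : fieldType) (H : algType k)
    (Delta : H -> seq (H * H)) (eps : H -> k) (S : H -> H)
    (hopfH : is_hopf Delta eps S) (bijS : bijective S)
    (M : lmodType k) (act : H -> M -> M) (modM : is_left_module act)
    (T : M -> M) (linT : klinear T) (projT : forall m : M, T (T m) = T m) :
  [<-> (forall (h : H) (m : M), Tc Delta S act T h (T m) = T (Tc Delta S act T h m));
       (forall (h : H) (m : M), Ttc Delta S act T h (T m) = T (Ttc Delta S act T h m));
       (forall (h l : H) (m : M),
          Tc Delta S act T h (Ttc Delta S act T l m)
          = Ttc Delta S act T l (Tc Delta S act T h m))].
Proof.
have adr_of_adl := commute_adr_of_adl hopfH modM.
have adl_of_adr := commute_adl_of_adr hopfH modM.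
tfae.
- by move=> cT h m; rewrite (adr_of_adl T T linT linT cT).
- move=> ctT h l m; have cT := adl_of_adr T T linT linT ctT.
  apply: (adr_of_adl _ T (klinear_adl Delta S modM h linT) linT) => a m'.
  by rewrite !(adlM hopfH modM _ _ _ linT) cT.
- have Ttc1 m : Ttc Delta S act T 1 m = T m := adr1 hopfH modM m linT.
  by move=> cc h m; have := cc h 1 m; rewrite !Ttc1.
Qed.
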